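(* Let $A$ be an integral residuated $\vee$-semilattice. Then every $\to$-prime filter of $A$ is $\vee$-prime, every $\leadsto$-prime filter of $A$ is $\vee$-prime, and every prime filter of $A$ is $\vee$-prime.
   Context: A residuated poset is a partially ordered semigroup $(A;\cdot,\le)$ with binary operations $\to,\leadsto$ such that $x\cdot y\le z$ iff $x\le y\to z$ iff $y\le x\leadsto z$. It is a residuated $\vee$-semilattice if $(A,\le)$ is a join-semilattice, and integral if it has a greatest element $1$ that is a multiplicative identity. A filter is a nonempty upward closed subset closed under $\cdot$. A filter $F$ is $\to$-prime if for all $x,y$, $x\to y\in F$ or $y\to x\in F$; $\leadsto$-prime if for all $x,y$, $x\leadsto y\in F$ or $y\leadsto x\in F$; prime if both; $\vee$-prime if $x\vee y\in F$ implies $x\in F$ or $y\in F$. *)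

Record IRJSL (A : Type) := {
  le : A -> A -> Prop;
  mul : A -> A -> A;
  imp : A -> A -> A;
  limp : A -> A -> A;
  join : A -> A -> A;
  one : A;
  le_refl : forall x, le x x;
  le_antisym : forall x y, le x y -> le y x -> x = y;
  le_trans : forall x y z, le x y -> le y z -> le x z;
  mul_assoc : forall x y z, mul (mul x y) z = mul x (mul y z);
  mul_mono : forall x y z w, le x y -> le z w -> le (mul x z) (mul y w);
  res_imp : forall x y z, le (mul x y) z <-> le x (imp y z);
  res_limp : forall x y z, le (mul x y) z <-> le y (limp x z);
  join_ub_l : forall x y, le x (join x y);
  join_ub_r : forall x y, le y (join x y);
  join_lub : forall x y z, le x z -> le y z -> le (join x y) z;
  one_top : forall x, le x one;
  mul_one_l : forall x, mul one x = x;
  mul_one_r : forall x, mul x one = x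
}.

Arguments le {A} _ _ _.
Arguments mul {A} _ _ _.
Arguments imp {A} _ _ _.
Arguments limp {A} _ _ _.
Arguments join {A} _ _ _.
Arguments one {A} _.

Section Filters.
Context {A : Type} (S : IRJSL A).

Definition is_filter (F : A -> Prop) : Prop :=
  (exists x, F x) /\
  (forall x y, F x -> le S x y -> F y) /\
  (forall x y, F x -> F y -> F (mul S x y)).

Definition imp_prime (F : A -> Prop) : Prop :=
  is_filter F /\ forall x y, F (imp S x y) \/ F (imp S y x).

Definition limp_prime (F : A -> Prop) : Prop :=
  is_filter F /\ forall x y, F (limp S x y) \/ F (limp S y x).

Definition prime_filter (F : A -> Prop) : Prop :=
  is_filter F /\ (forall x y, F (imp S x y) \/ F (imp S y x))
              /\ (forall x y, F (limp S x y) \/ F (limp S y x)).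

Definition join_prime (F : A -> Prop) : Prop :=
  is_filter F /\ forall x y, F (join S x y) -> F x \/ F y.

End Filters.


(* If [x -> y] and [x \/ y] lie in a filter, so does their product, and it is
   below [y]: multiplication by [x -> y] preserves joins because it has a
   residual, [(x -> y) x <= y] is modus ponens, and [(x -> y) y <= y] by
   integrality.  Linearity of [->] supplies [x -> y] or [y -> x], so one of
   [x], [y] lies in the filter.  The case of [~>] is the mirror image. *)

Section Residuation.
Variables (A : Type) (S : IRJSL A).

Lemma le_eq_trans (x y z : A) : le S x y -> y = z -> le S x z.
Proof. intros Hxy <-; exact Hxy. Qed.

Lemma mul_le_r (x y : A) : le S (mul S x y) y.
Proof.
  apply le_eq_trans with (mul S (one S) y); [|apply mul_one_l].
  apply mul_mono; [apply one_top | apply le_refl].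
Qed.

Lemma mul_le_l (x y : A) : le S (mul S x y) x.
Proof.
  apply le_eq_trans with (mul S x (one S)); [|apply mul_one_r].
  apply mul_mono; [apply le_refl | apply one_top].
Qed.

Lemma mul_imp_le (x y : A) : le S (mul S (imp S x y) x) y.
Proof. apply res_imp, le_refl. Qed.

Lemma mul_limp_le (x y : A) : le S (mul S x (limp S x y)) y.
Proof. apply res_limp, le_refl. Qed.

Lemma mul_imp_join_le (x y : A) : le S (mul S (imp S x y) (join S x y)) y.
Proof.
  apply res_limp, join_lub; apply res_limp.
  - apply mul_imp_le.
  - apply mul_le_r.
Qed.

Lemma mul_join_limp_le (x y : A) : le S (mul S (join S x y) (limp S x y)) y.
Proof.
  apply res_imp, join_lub; apply res_imp.
  - apply mul_limp_le.
  - apply mul_le_l.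
Qed.

Lemma join_comm_le (x y : A) : le S (join S x y) (join S y x).
Proof. apply join_lub; [apply join_ub_r | apply join_ub_l]. Qed.

Variable F : A -> Prop.
Hypothesis F_filter : is_filter S F.

Lemma filter_up (x y : A) : F x -> le S x y -> F y.
Proof. apply F_filter. Qed.

Lemma filter_mul (x y : A) : F x -> F y -> F (mul S x y).
Proof. apply F_filter. Qed.

Lemma filter_join_imp (x y : A) : F (join S x y) -> F (imp S x y) -> F y.
Proof.
  intros Hxy Himp.
  apply filter_up with (mul S (imp S x y) (join S x y)).
  - apply filter_mul; assumption.
  - apply mul_imp_join_le.
Qed.

Lemma filter_join_limp (x y : A) : F (join S x y) -> F (limp S x y) -> F y.
Proof.
  intros Hxy Hlimp.
  apply filter_up with (mul S (join S x y) (limp S x y)).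
  - apply filter_mul; assumption.
  - apply mul_join_limp_le.
Qed.

Lemma join_prime_of_linear (r : A -> A -> A) :
  (forall x y, F (join S x y) -> F (r x y) -> F y) ->
  (forall x y, F (r x y) \/ F (r y x)) ->
  join_prime S F.
Proof.
  intros r_join r_linear. split; [exact F_filter|].
  intros x y Hxy. destruct (r_linear x y) as [Hr | Hr].
  - right. exact (r_join x y Hxy Hr).
  - left. apply (r_join y x); [|exact Hr].
    exact (filter_up _ _ Hxy (join_comm_le x y)).
Qed.

End Residuation.

Lemma imp_prime_join_prime (A : Type) (S : IRJSL A) (F : A -> Prop) :
  imp_prime S F -> join_prime S F.
Proof.
  intros [HF Hlin].
  exact (join_prime_of_linear A S F HF (imp S) (filter_join_imp A S F HF) Hlin).
Qed.

Lemma limp_prime_join_prime (A : Type) (S : IRJSL A) (F : A -> Prop) :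
  limp_prime S F -> join_prime S F.
Proof.
  intros [HF Hlin].
  exact (join_prime_of_linear A S F HF (limp S) (filter_join_limp A S F HF) Hlin).
Qed.

Theorem lemma5p2 (A : Type) (S : IRJSL A) :
  (forall F : A -> Prop, imp_prime S F -> join_prime S F) /\
  (forall F : A -> Prop, limp_prime S F -> join_prime S F) /\
  (forall F : A -> Prop, prime_filter S F -> join_prime S F).
Proof.
  split; [|split].
  - apply imp_prime_join_prime.
  - apply limp_prime_join_prime.
  - intros F [HF [Himp _]]. apply imp_prime_join_prime. split; assumption.
Qed.
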